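(* Let $x_L<x_R$, $\Delta x=x_R-x_L$, and let $\sigma_L,\sigma_R:[0,\infty)\to[0,\infty)$ be piecewise linear continuous functions. Define for $x\in[x_L,x_R]$, $y\ge0$, $$\sigma(x,y)=\frac{\sigma_R(y)(x-x_L)+\sigma_L(y)(x_R-x)}{\Delta x},\qquad B(x)=B_L+(B_R-B_L)\frac{x-x_L}{\Delta x},$$ with $B_L,B_R\in\mathbb R$. Let $W\in\mathbb R$ be a constant water-surface elevation and $h(x)=\max(W-B(x),0)$. Set $$A(x)=\int_0^{h(x)}\sigma(x,y)\,dy,\quad I_1(x)=\int_0^{h(x)}(h(x)-y)\sigma(x,y)\,dy,\quad I_2(x)=\int_0^{h(x)}(h(x)-y)\,\partial_x\sigma(x,y)\,dy.$$ Then $$I_1(x_R)-I_1(x_L)-\int_{x_L}^{x_R}I_2(x)\,dx+\int_{x_L}^{x_R}A(x)\,B'(x)\,dx=0.$$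
   Context: $I_1$ is the hydrostatic pressure force and $I_2$ the wall pressure force of a channel with cross-section width $\sigma(x,y)$ at longitudinal position $x$ and height $y$ above the bed $B(x)$; the cross-section is linearly interpolated in $x$ between two given piecewise-linear cross-sections at the cell ends. *)

From Stdlib Require Import Reals Lra List Sorted Classical ClassicalEpsilon.
Open Scope R_scope.

(* Total Riemann integral: RiemannInt if f is Riemann integrable on [a,b]
   (with Stdlib's orientation convention), 0 otherwise. *)
Definition RInt (f : R -> R) (a b : R) : R :=
  match excluded_middle_informative
          (exists pr : Riemann_integrable f a b, True) with
  | left H => RiemannInt (proj1_sig (constructive_indefinite_description _ H))
  | right _ => 0
  end.

(* f : [0,oo) -> R is piecewise linear (hence continuous): there are finitely
   many breakpoints 0 = y_0 < y_1 < ... < y_n such that f is affine on each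
   closed segment [y_i, y_{i+1}] and on [y_n, oo). Affinity on closed
   segments sharing endpoints gives continuity on [0,oo). *)
Definition piecewise_linear (f : R -> R) : Prop :=
  exists p : list R,
    Sorted Rlt (0 :: p) /\
    (forall i : nat, (i < length p)%nat ->
       exists a b : R, forall y, nth i (0 :: p) 0 <= y <= nth (S i) (0 :: p) 0 ->
                                 f y = a * y + b) /\
    (exists a b : R, forall y, last (0 :: p) 0 <= y -> f y = a * y + b).

(* continuity on [0,oo) (implied by the above, stated for explicitness) *)
Definition continuous_on_nonneg (f : R -> R) : Prop :=
  forall y, 0 <= y -> continuity_pt f y.

Definition sect_width (xL xR : R) (sL sR : R -> R) (x y : R) : R :=
  (sR y * (x - xL) + sL y * (xR - x)) / (xR - xL).

Definition bed (xL xR BL BR : R) (x : R) : R :=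
  BL + (BR - BL) * (x - xL) / (xR - xL).

From Pilot Require Import Defs.
From Stdlib Require Import Reals Lra ClassicalEpsilon.
From Coquelicot Require Import Coquelicot.
Open Scope R_scope.

(* Extend a cross-section width s from [0,oo) to R by s(max y 0) and put
   F(u) = int_0^u s and M(u) = int_0^u F(max t 0) dt. For h >= 0, the
   hydrostatic integral int_0^h (h - y) s(y) dy equals M(h) (integration by
   parts), and M(u) = M(max u 0). Since the width is affine in x, I1(x) is the
   interpolation Phi(x) of M_R and M_L evaluated at W - B(x), I2(x) is the
   difference quotient of M_R and M_L, and A(x) the interpolation of F_R and
   F_L. The chain rule M' = F then gives Phi' = I2 - A B', and the identity is
   the fundamental theorem of calculus for Phi on [xL, xR]. *)

Lemma Defs_RInt_unique (f : R -> R) a b v : is_RInt f a b v -> Defs.RInt f a b = v.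
Proof.
  intros Hf; unfold Defs.RInt.
  destruct excluded_middle_informative as [Hint | Hnint].
  - destruct constructive_indefinite_description as [pr Hpr]; simpl.
    rewrite <- RInt_Reals; now apply is_RInt_unique.
  - exfalso; apply Hnint.
    now exists (ex_RInt_Reals_0 _ _ _ (ex_intro _ v Hf)).
Qed.

Lemma is_RInt_lin_comb (f g : R -> R) a b u v c d :
  is_RInt f a b u -> is_RInt g a b v ->
  is_RInt (fun y => c * f y + d * g y) a b (c * u + d * v).
Proof.
  intros Hf Hg.
  exact (is_RInt_plus _ _ _ _ _ _ (is_RInt_scal _ _ _ c _ Hf) (is_RInt_scal _ _ _ d _ Hg)).
Qed.

Lemma Defs_RInt_lin_comb (F f g : R -> R) a b u v c d :
  a <= b -> is_RInt f a b u -> is_RInt g a b v ->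
  (forall y, a < y < b -> F y = c * f y + d * g y) ->
  Defs.RInt F a b = c * u + d * v.
Proof.
  intros Hab Hf Hg HF; apply Defs_RInt_unique.
  apply (is_RInt_ext (fun y => c * f y + d * g y)).
  - intros y Hy; rewrite Rmin_left, Rmax_right in Hy by lra; symmetry; now apply HF.
  - now apply is_RInt_lin_comb.
Qed.

Lemma Defs_RInt_continuous_in (f g : R -> R) a b :
  a <= b -> (forall x, a <= x <= b -> f x = g x) -> (forall x, continuous g x) ->
  Defs.RInt f a b = RInt g a b.
Proof.
  intros Hab Hfg Hg; apply Defs_RInt_unique.
  apply (is_RInt_ext g).
  - intros x Hx; rewrite Rmin_left, Rmax_right in Hx by lra; symmetry; apply Hfg; lra.
  - apply (RInt_correct (V := R_CompleteNormedModule)), ex_RInt_continuous; auto.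
Qed.

Lemma continuous_Rmax_0 u : continuous (fun t => Rmax t 0) u.
Proof.
  apply (continuous_ext (fun t => (t + Rabs t) / 2)).
  - intros t; unfold Rmax; destruct Rle_dec.
    + rewrite Rabs_left1 by lra; lra.
    + rewrite Rabs_pos_eq by lra; lra.
  - apply (continuous_mult (fun t => t + Rabs t) (fun _ => /2)); [|apply continuous_const].
    apply (continuous_plus (fun t => t) Rabs); [apply continuous_id | apply continuous_Rabs].
Qed.

Lemma is_derive_primitive (f : R -> R) (Hf : forall y, continuous f y) u :
  is_derive (fun v => RInt f 0 v) u (f u).
Proof.
  apply (is_derive_RInt f _ 0); [| apply Hf].
  apply filter_forall; intros v.
  apply (RInt_correct (V := R_CompleteNormedModule)), ex_RInt_continuous; auto.
Qed.

Section Moments.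

Variable s : R -> R.
Hypothesis s_cont : continuous_on_nonneg s.

Definition extend_nonneg y := s (Rmax y 0).

Lemma continuous_extend_nonneg y : continuous extend_nonneg y.
Proof.
  apply (continuous_comp (fun t => Rmax t 0) s); [apply continuous_Rmax_0 |].
  apply continuity_pt_filterlim, s_cont, Rmax_r.
Qed.

Definition area u := RInt extend_nonneg 0 u.

Lemma is_derive_area u : is_derive area u (extend_nonneg u).
Proof. apply is_derive_primitive, continuous_extend_nonneg. Qed.

Lemma continuous_area u : continuous area u.
Proof. apply (ex_derive_continuous (V := R_NormedModule)); eexists; apply is_derive_area. Qed.

Lemma is_RInt_area h : 0 <= h -> is_RInt s 0 h (area h).
Proof.
  intros Hh; apply (is_RInt_ext extend_nonneg).
  - intros y Hy; rewrite Rmin_left in Hy by lra.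
    unfold extend_nonneg; now rewrite Rmax_left by lra.
  - apply (RInt_correct (V := R_CompleteNormedModule)), ex_RInt_continuous.
    intros; apply continuous_extend_nonneg.
Qed.

Definition moment u := RInt (fun t => area (Rmax t 0)) 0 u.

Lemma continuous_area_Rmax_0 t : continuous (fun t => area (Rmax t 0)) t.
Proof.
  apply (continuous_comp (fun t => Rmax t 0) area);
    [apply continuous_Rmax_0 | apply continuous_area].
Qed.

Lemma is_derive_moment u : is_derive moment u (area (Rmax u 0)).
Proof. apply (is_derive_primitive (fun t => area (Rmax t 0))), continuous_area_Rmax_0. Qed.

Lemma continuous_moment u : continuous moment u.
Proof. apply (ex_derive_continuous (V := R_NormedModule)); eexists; apply is_derive_moment. Qed.

Lemma moment_nonpos u : u <= 0 -> moment u = 0.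
Proof.
  intros Hu; apply is_RInt_unique.
  replace 0 with (scal (u - 0) 0) at 2 by (unfold scal; simpl; unfold mult; simpl; ring).
  apply (is_RInt_ext (V := R_NormedModule) (fun _ => 0));
    [| apply (is_RInt_const (V := R_NormedModule))].
  intros t Ht; rewrite Rmax_left in Ht by lra.
  rewrite Rmax_right by lra; unfold area; now rewrite RInt_point.
Qed.

Lemma moment_Rmax_0 u : moment (Rmax u 0) = moment u.
Proof.
  unfold Rmax at 1; destruct Rle_dec as [Hu | Hu]; [| reflexivity].
  rewrite !moment_nonpos; lra.
Qed.

(* Integration by parts: for h >= 0, int_0^h F = h F(h) - int_0^h y s(y) dy. *)
Lemma is_RInt_moment h : 0 <= h -> is_RInt (fun y => (h - y) * s y) 0 h (moment h).
Proof.
  intros Hh.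
  set (G u := RInt (fun y => y * extend_nonneg y) 0 u).
  assert (HyF : forall y, continuous (fun y => y * extend_nonneg y) y).
  { intros y; apply (continuous_mult (fun y => y) extend_nonneg);
      [apply continuous_id | apply continuous_extend_nonneg]. }
  assert (HG : forall u, is_derive G u (u * extend_nonneg u))
    by (intros; now apply (is_derive_primitive (fun y => y * extend_nonneg y))).
  assert (HP : forall u, is_derive (fun u => u * area u - G u) u (area u)).
  { intros u; auto_derive.
    - split; [eexists; apply is_derive_area |].
      split; [eexists; apply HG | exact I].
    - change (fun x => area x) with area; change (fun x => G x) with G.
      rewrite (is_derive_unique _ _ _ (is_derive_area u)), (is_derive_unique _ _ _ (HG u)); ring. }
  assert (Hmoment : moment h = h * area h - G h).
  { apply is_RInt_unique.
    replace (h * area h - G h) with (minus (h * area h - G h) (0 * area 0 - G 0))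
      by (unfold G, minus, plus, opp; simpl; rewrite RInt_point; unfold zero; simpl; ring).
    apply (is_RInt_ext area).
    - intros t Ht; rewrite Rmin_left in Ht by lra; now rewrite Rmax_left by lra.
    - apply (is_RInt_derive (fun u => u * area u - G u));
        intros; [apply HP | apply continuous_area]. }
  rewrite Hmoment; replace (h * area h - G h) with (h * area h + (-1) * G h) by ring.
  apply (is_RInt_ext (fun y => h * s y + (-1) * (y * extend_nonneg y))).
  - intros y Hy; rewrite Rmin_left in Hy by lra.
    assert (E : h * s y + (-1) * (y * extend_nonneg y) = (h - y) * s y)
      by (unfold extend_nonneg; rewrite Rmax_left by lra; ring).
    exact E.
  - apply is_RInt_lin_comb; [now apply is_RInt_area |].
    apply (RInt_correct (V := R_CompleteNormedModule)), ex_RInt_continuous; auto.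
Qed.

End Moments.

Section Cell.

Variables (xL xR : R) (sL sR : R -> R) (BL BR W : R).
Hypothesis hx : xL < xR.

Lemma derivable_sect_width x y :
  derivable_pt_lim (fun t => sect_width xL xR sL sR t y) x ((sR y - sL y) / (xR - xL)).
Proof.
  apply is_derive_Reals; unfold sect_width.
  auto_derive; [exact I | field; lra].
Qed.

Lemma derivable_bed x : derivable_pt_lim (bed xL xR BL BR) x ((BR - BL) / (xR - xL)).
Proof. apply is_derive_Reals; unfold bed; auto_derive; [exact I | field; lra]. Qed.

Definition lerp (uR uL x : R) := ((x - xL) * uR + (xR - x) * uL) / (xR - xL).

Lemma continuous_lerp (uR uL : R -> R) x :
  continuous uR x -> continuous uL x -> continuous (fun t => lerp (uR t) (uL t) t) x.
Proof.
  intros HR HL.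
  set (cR t := (t - xL) / (xR - xL)); set (cL t := (xR - t) / (xR - xL)).
  assert (E : forall t, cR t * uR t + cL t * uL t = lerp (uR t) (uL t) t)
    by (intros t; unfold cR, cL, lerp; field; lra).
  apply (continuous_ext _ _ x E).
  assert (Hc : forall c : R -> R, ex_derive c x -> continuous c x)
    by (intros c; apply (ex_derive_continuous (V := R_NormedModule))).
  apply (continuous_plus (fun t => cR t * uR t) (fun t => cL t * uL t));
    [apply (continuous_mult cR uR) | apply (continuous_mult cL uL)];
    auto; apply Hc; unfold cR, cL; auto_derive; exact I.
Qed.

Lemma is_derive_lerp (uR uL : R -> R) x dR dL d :
  is_derive uR x dR -> is_derive uL x dL -> d = (uR x - uL x) / (xR - xL) + lerp dR dL x ->
  is_derive (fun t => lerp (uR t) (uL t) t) x d.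
Proof.
  intros HR HL ->; unfold lerp; auto_derive.
  - split; [eexists; exact HR |]; split; [eexists; exact HL | exact I].
  - change (fun t => uR t) with uR; change (fun t => uL t) with uL.
    rewrite (is_derive_unique _ _ _ HR), (is_derive_unique _ _ _ HL); field; lra.
Qed.

Hypotheses (hsLc : continuous_on_nonneg sL) (hsRc : continuous_on_nonneg sR).

Lemma RInt_sect_width x h : 0 <= h ->
  Defs.RInt (fun y => sect_width xL xR sL sR x y) 0 h = lerp (area sR h) (area sL h) x.
Proof.
  intros Hh.
  rewrite (Defs_RInt_lin_comb _ sR sL 0 h (area sR h) (area sL h)
             ((x - xL) / (xR - xL)) ((xR - x) / (xR - xL)) Hh);
    auto using is_RInt_area.
  - unfold lerp; field; lra.
  - intros y _; unfold sect_width; field; lra.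
Qed.

Lemma RInt_pressure_sect_width x h : 0 <= h ->
  Defs.RInt (fun y => (h - y) * sect_width xL xR sL sR x y) 0 h
  = lerp (moment sR h) (moment sL h) x.
Proof.
  intros Hh.
  rewrite (Defs_RInt_lin_comb _ (fun y => (h - y) * sR y) (fun y => (h - y) * sL y) 0 h
             (moment sR h) (moment sL h)
             ((x - xL) / (xR - xL)) ((xR - x) / (xR - xL)) Hh);
    auto using is_RInt_moment.
  - unfold lerp; field; lra.
  - intros y _; unfold sect_width; field; lra.
Qed.

Lemma RInt_pressure_slope (ds : R -> R) h : 0 <= h ->
  (forall y, 0 <= y -> ds y = (sR y - sL y) / (xR - xL)) ->
  Defs.RInt (fun y => (h - y) * ds y) 0 h = (moment sR h - moment sL h) / (xR - xL).
Proof.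
  intros Hh Hds.
  rewrite (Defs_RInt_lin_comb _ (fun y => (h - y) * sR y) (fun y => (h - y) * sL y) 0 h
             (moment sR h) (moment sL h)
             (/ (xR - xL)) (- / (xR - xL)) Hh);
    auto using is_RInt_moment.
  - field; lra.
  - intros y Hy; rewrite Hds by lra; field; lra.
Qed.

Definition depth x := Rmax (W - bed xL xR BL BR x) 0.

(* Unclamped at W - B(x), hence differentiable; it equals I1 by [moment_Rmax_0]. *)
Definition hydrostatic_force x :=
  lerp (moment sR (W - bed xL xR BL BR x)) (moment sL (W - bed xL xR BL BR x)) x.

Definition wall_force x := (moment sR (depth x) - moment sL (depth x)) / (xR - xL).

Definition bed_force x :=
  lerp (area sR (depth x)) (area sL (depth x)) x * ((BR - BL) / (xR - xL)).

Lemma hydrostatic_force_depth x :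
  hydrostatic_force x = lerp (moment sR (depth x)) (moment sL (depth x)) x.
Proof. unfold hydrostatic_force, depth; now rewrite !moment_Rmax_0. Qed.

Lemma is_derive_hydrostatic_force x : is_derive hydrostatic_force x (wall_force x - bed_force x).
Proof.
  assert (Hg : is_derive (fun t => W - bed xL xR BL BR t) x (- ((BR - BL) / (xR - xL)))).
  { unfold bed; auto_derive; [exact I | field; lra]. }
  assert (HM : forall s, continuous_on_nonneg s ->
            is_derive (fun t => moment s (W - bed xL xR BL BR t)) x
              (- ((BR - BL) / (xR - xL)) * area s (depth x))).
  { intros s Hs; apply (is_derive_comp (moment s)); [| exact Hg].
    now apply is_derive_moment. }
  apply is_derive_lerp with (1 := HM sR hsRc) (2 := HM sL hsLc).
  unfold wall_force, bed_force, depth, lerp; rewrite !moment_Rmax_0; field; lra.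
Qed.

Lemma continuous_depth x : continuous depth x.
Proof.
  apply (continuous_comp (fun t => W - bed xL xR BL BR t) (fun u => Rmax u 0));
    [| apply continuous_Rmax_0].
  apply (ex_derive_continuous (V := R_NormedModule)); unfold bed; auto_derive; exact I.
Qed.

Lemma continuous_wall_force x : continuous wall_force x.
Proof.
  assert (HM : forall s, continuous_on_nonneg s -> continuous (fun t => moment s (depth t)) x)
    by (intros s Hs; apply (continuous_comp depth (moment s));
        [apply continuous_depth | now apply continuous_moment]).
  apply (continuous_mult (fun t => moment sR (depth t) - moment sL (depth t))
                         (fun _ => / (xR - xL)));
    [apply (continuous_minus (fun t => moment sR (depth t))) | apply continuous_const]; auto.
Qed.

Lemma continuous_bed_force x : continuous bed_force x.
Proof.
  assert (HA : forall s, continuous_on_nonneg s -> continuous (fun t => area s (depth t)) x)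
    by (intros s Hs; apply (continuous_comp depth (area s));
        [apply continuous_depth | now apply continuous_area]).
  apply (continuous_mult (fun t => lerp (area sR (depth t)) (area sL (depth t)) t)
                         (fun _ => (BR - BL) / (xR - xL)));
    [apply continuous_lerp | apply continuous_const]; auto.
Qed.

Lemma RInt_wall_force_sub_bed_force :
  RInt wall_force xL xR - RInt bed_force xL xR = hydrostatic_force xR - hydrostatic_force xL.
Proof.
  assert (Hex : forall f : R -> R, (forall x, continuous f x) -> ex_RInt f xL xR)
    by (intros f Hf; apply (ex_RInt_continuous (V := R_CompleteNormedModule)); auto).
  transitivity (RInt (fun x => wall_force x - bed_force x) xL xR).
  { symmetry; apply (RInt_minus (V := R_CompleteNormedModule));
      apply Hex; [apply continuous_wall_force | apply continuous_bed_force]. }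
  apply is_RInt_unique, (is_RInt_derive (V := R_CompleteNormedModule) hydrostatic_force).
  - intros; apply is_derive_hydrostatic_force.
  - intros; apply (continuous_minus wall_force bed_force);
      [apply continuous_wall_force | apply continuous_bed_force].
Qed.

End Cell.

(* Coquelicot's [RInt] shadowed the total integral [Defs.RInt] of the statement. *)
Import Defs.

Theorem mainTheorem2
  (xL xR : R) (sL sR : R -> R) (BL BR W : R)
  (dsigma : R -> R -> R) (dB : R -> R)
  (hx : xL < xR)
  (hsL : piecewise_linear sL) (hsR : piecewise_linear sR)
  (hsLc : continuous_on_nonneg sL) (hsRc : continuous_on_nonneg sR)
  (hsLp : forall y, 0 <= y -> 0 <= sL y) (hsRp : forall y, 0 <= y -> 0 <= sR y)
  (hdsigma : forall x y, xL <= x <= xR -> 0 <= y ->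
     derivable_pt_lim (fun t => sect_width xL xR sL sR t y) x (dsigma x y))
  (hdB : forall x, xL <= x <= xR ->
     derivable_pt_lim (bed xL xR BL BR) x (dB x)) :
  let h := fun x => Rmax (W - bed xL xR BL BR x) 0 in
  let A := fun x => RInt (fun y => sect_width xL xR sL sR x y) 0 (h x) in
  let I1 := fun x => RInt (fun y => (h x - y) * sect_width xL xR sL sR x y) 0 (h x) in
  let I2 := fun x => RInt (fun y => (h x - y) * dsigma x y) 0 (h x) in
  I1 xR - I1 xL - RInt I2 xL xR + RInt (fun x => A x * dB x) xL xR = 0.
Proof.
  intros h A I1 I2.
  assert (HI1 : forall x, I1 x = hydrostatic_force xL xR sL sR BL BR W x).
  { intros x; rewrite hydrostatic_force_depth.
    apply RInt_pressure_sect_width; auto; apply Rmax_r. }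
  assert (HI2 : forall x, xL <= x <= xR -> I2 x = wall_force xL xR sL sR BL BR W x).
  { intros x Hx; apply RInt_pressure_slope; auto; [apply Rmax_r |].
    intros y Hy; eapply uniqueness_limite;
      [apply hdsigma; auto | apply derivable_sect_width; lra]. }
  assert (HAdB : forall x, xL <= x <= xR -> A x * dB x = bed_force xL xR sL sR BL BR W x).
  { intros x Hx; unfold A, bed_force.
    rewrite (uniqueness_limite _ _ _ _ (hdB x Hx) (derivable_bed xL xR BL BR hx x)).
    rewrite RInt_sect_width; auto; apply Rmax_r. }
  rewrite !HI1, (Defs_RInt_continuous_in _ _ _ _ (Rlt_le _ _ hx) HI2),
    (Defs_RInt_continuous_in _ _ _ _ (Rlt_le _ _ hx) HAdB)
    by auto using continuous_wall_force, continuous_bed_force.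
  pose proof (RInt_wall_force_sub_bed_force xL xR sL sR BL BR W hx hsLc hsRc); lra.
Qed.
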